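(* Suppose $a\in C^2(\mathbb{R})$. Let $\tilde\alpha\in\mathbb{R}^2$ be such that $a'(\tilde\alpha_2)>0$. Given $s_0,t_0>0$ sufficiently small depending on the function $a$ and $\tilde\alpha_2$, there exists $0<\epsilon_0<1$ sufficiently small such that for all $0<\epsilon\leq \epsilon_0$, the system \begin{equation*} G^{\epsilon}(\gamma)=0 \end{equation*} has a non-negative solution.
   Context: Let $a:\mathbb{R}\to\mathbb{R}$, $F(\xi)=\int_0^\xi a(s)\,ds$, and for $\alpha\in\mathbb{R}^2$ let $$P_1^{\alpha}(u,v):=\begin{pmatrix} u-\alpha_1 & v-\alpha_2 \\ a(v)-a(\alpha_2) & u-\alpha_1\\ (u-\alpha_1)(a(v)-a(\alpha_2)) & \frac{(u-\alpha_1)^2}{2}+F(v)-F(\alpha_2)-a(\alpha_2)(v-\alpha_2) \end{pmatrix}.$$ Given $s_0,t_0>0$ set $\zeta_1:=P_1^{\tilde\alpha}(\tilde\alpha_1+s_0,\tilde\alpha_2)$, $\zeta_2:=P_1^{\tilde\alpha}(\tilde\alpha_1-s_0,\tilde\alpha_2)$, $\zeta_3:=P_1^{\tilde\alpha}(\tilde\alpha_1,\tilde\alpha_2+t_0)$, $\zeta_4:=P_1^{\tilde\alpha}(\tilde\alpha_1,\tilde\alpha_2-t_0)$. Let $D_1,D_2,D_3$ denote the $(1,2)$, $(2,3)$, $(1,3)$ row-minors of a $3\times 2$ matrix, respectively. Let $A\in M^{4\times 4}$ be the matrix whose $j$-th column is $(D_1(\zeta_j),D_2(\zeta_j),D_3(\zeta_j),1)^T$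 for $j=1,2,3,4$. For $\epsilon>0$ and $\gamma\in\mathbb{R}^4$ define $L^{\epsilon}(\gamma):=A\gamma-(0,0,0,\epsilon)^T$, $Q(\gamma):=\left(D_1\left(\sum_{j=1}^4[\gamma]_j\zeta_j\right),D_2\left(\sum_{j=1}^4[\gamma]_j\zeta_j\right),D_3\left(\sum_{j=1}^4[\gamma]_j\zeta_j\right),0\right)^T$, and $G^{\epsilon}(\gamma):=L^{\epsilon}(\gamma)-Q(\gamma)$. *)

From Stdlib Require Import Reals.
From Coquelicot Require Import Coquelicot.
Open Scope R_scope.

Definition C2 (a : R -> R) : Prop :=
  (forall x, ex_derive a x) /\
  (forall x, ex_derive (Derive a) x) /\
  (forall x, continuous (Derive (Derive a)) x).

Definition Fint (a : R -> R) (xi : R) : R := RInt a 0 xi.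

Record M32 := mkM32 { m11 : R; m12 : R; m21 : R; m22 : R; m31 : R; m32 : R }.

Definition M32_add (M N : M32) : M32 :=
  mkM32 (m11 M + m11 N) (m12 M + m12 N) (m21 M + m21 N)
        (m22 M + m22 N) (m31 M + m31 N) (m32 M + m32 N).
Definition M32_scale (c : R) (M : M32) : M32 :=
  mkM32 (c * m11 M) (c * m12 M) (c * m21 M) (c * m22 M) (c * m31 M) (c * m32 M).

Definition D1 (M : M32) : R := m11 M * m22 M - m12 M * m21 M.
Definition D2 (M : M32) : R := m21 M * m32 M - m22 M * m31 M.
Definition D3 (M : M32) : R := m11 M * m32 M - m12 M * m31 M.

Definition P1 (a : R -> R) (al1 al2 u v : R) : M32 :=
  mkM32 (u - al1) (v - al2)
        (a v - a al2) (u - al1)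
        ((u - al1) * (a v - a al2))
        ((u - al1) ^ 2 / 2 + Fint a v - Fint a al2 - a al2 * (v - al2)).

Record V4 := mkV4 { c1 : R; c2 : R; c3 : R; c4 : R }.
Definition V4_zero : V4 := mkV4 0 0 0 0.
Definition V4_nonneg (g : V4) : Prop :=
  0 <= c1 g /\ 0 <= c2 g /\ 0 <= c3 g /\ 0 <= c4 g.
Definition V4_sub (x y : V4) : V4 :=
  mkV4 (c1 x - c1 y) (c2 x - c2 y) (c3 x - c3 y) (c4 x - c4 y).

Section Construction.
Variables (a : R -> R) (al1 al2 s0 t0 : R).

Definition zeta1 : M32 := P1 a al1 al2 (al1 + s0) al2.
Definition zeta2 : M32 := P1 a al1 al2 (al1 - s0) al2.
Definition zeta3 : M32 := P1 a al1 al2 al1 (al2 + t0).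
Definition zeta4 : M32 := P1 a al1 al2 al1 (al2 - t0).

(* column j of A is (D1 zeta_j, D2 zeta_j, D3 zeta_j, 1)^T *)
Definition Acol (Z : M32) : V4 := mkV4 (D1 Z) (D2 Z) (D3 Z) 1.

Definition Amul (g : V4) : V4 :=
  let k1 := Acol zeta1 in let k2 := Acol zeta2 in
  let k3 := Acol zeta3 in let k4 := Acol zeta4 in
  mkV4 (c1 g * c1 k1 + c2 g * c1 k2 + c3 g * c1 k3 + c4 g * c1 k4)
       (c1 g * c2 k1 + c2 g * c2 k2 + c3 g * c2 k3 + c4 g * c2 k4)
       (c1 g * c3 k1 + c2 g * c3 k2 + c3 g * c3 k3 + c4 g * c3 k4)
       (c1 g * c4 k1 + c2 g * c4 k2 + c3 g * c4 k3 + c4 g * c4 k4).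

Definition Lmap (eps : R) (g : V4) : V4 := V4_sub (Amul g) (mkV4 0 0 0 eps).

Definition combo (g : V4) : M32 :=
  M32_add (M32_add (M32_scale (c1 g) zeta1) (M32_scale (c2 g) zeta2))
          (M32_add (M32_scale (c3 g) zeta3) (M32_scale (c4 g) zeta4)).

Definition Qmap (g : V4) : V4 :=
  mkV4 (D1 (combo g)) (D2 (combo g)) (D3 (combo g)) 0.

Definition Gmap (eps : R) (g : V4) : V4 := V4_sub (Lmap eps g) (Qmap g).

End Construction.

(** For [gamma = (q/2, q/2, u, w)] the third component of [G^eps] vanishes
    identically and the rest reduces to two polynomial equations in [(q, u, w)]
    and [q + u + w = eps], with coefficients [A = a(al2+t0) - a(al2)],
    [B = a(al2) - a(al2-t0)] and the first-order Taylor remainders [H], [Hp] of [F]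
    at [al2]; all four are positive for small [t0] because [a] is strictly
    increasing near [al2].  The solutions form a curve through the origin,
    parametrized by [k = s0^2 q/2 + u H + w Hp]: the second equation fixes the
    ratio [u A : w B = (Hp - k) : (H - k)], after which the first one is a
    quadratic equation in [T = u A + w B] whose small root is explicit and
    nonnegative.  Along this curve [q + u + w] is continuous, vanishes at [k = 0]
    and is positive further on, so the intermediate value theorem reaches every
    small [eps].  No smallness of [s0] is needed. *)

From Stdlib Require Import Reals Lra Psatz.
From Coquelicot Require Import Coquelicot.
Open Scope R_scope.

(** The root of [be T^2 - al T + k = 0] that vanishes with [k]; in this form
    it is also the root when [be = 0]. *)
Definition small_root (al be k : R) : R := 2 * k / (al + sqrt (al ^ 2 - 4 * be * k)).

Lemma small_root_spec al be k :
  0 < al -> 0 <= k -> 0 <= al ^ 2 - 4 * be * k ->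
  al * small_root al be k - be * small_root al be k ^ 2 = k /\
  0 <= small_root al be k /\ (0 < k -> 0 < small_root al be k) /\
  al * small_root al be k <= 2 * k.
Proof.
intros hal hk hd.
set (r := sqrt (al ^ 2 - 4 * be * k)).
assert (hr : 0 <= r) by apply sqrt_pos.
assert (rr : r * r = al ^ 2 - 4 * be * k) by (apply sqrt_sqrt; lra).
assert (eT : small_root al be k * (al + r) = 2 * k).
{ unfold small_root; fold r; field; lra. }
set (T := small_root al be k) in *.
assert (hT : 0 <= T) by nra.
split; [|split; [exact hT|split]].
- apply Rmult_eq_reg_r with ((al + r) ^ 2); [|apply pow_nonzero; lra].
  replace ((al * T - be * T ^ 2) * (al + r) ^ 2)
    with (al * (al + r) * (T * (al + r)) - be * (T * (al + r)) ^ 2) by ring.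
  rewrite eT.
  replace ((al + r) ^ 2) with (al ^ 2 + 2 * al * r + r * r) by ring.
  rewrite rr; ring.
- intros hk0; nra.
- nra.
Qed.

Lemma increasing_near (f : R -> R) (x : R) :
  (forall y, ex_derive f y) -> continuous (Derive f) x -> 0 < Derive f x ->
  exists del, 0 < del /\
    forall y z, x - del < y -> y < z -> z < x + del -> f y < f z.
Proof.
intros hf hcont hpos.
assert (hhalf : 0 < Derive f x / 2) by lra.
destruct (proj1 (filterlim_locally _ _) hcont (mkposreal _ hhalf)) as [del hdel].
assert (hD : forall c, x - del < c < x + del -> 0 < Derive f c).
{ intros c hc.
  assert (hball : Rabs (Derive f c - Derive f x) < Derive f x / 2).
  { apply (hdel c); change (Rabs (c - x) < del); apply Rabs_def1; lra. }
  apply Rabs_def2 in hball; lra. }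
exists del; split; [apply cond_pos|].
intros y z hy hyz hz.
destruct (MVT_cor2 f (Derive f) y z hyz) as (c & ec & hc).
{ intros c _; apply is_derive_Reals, Derive_correct, hf. }
assert (0 < Derive f c * (z - y)) by (apply Rmult_lt_0_compat; [apply hD|]; lra).
lra.
Qed.

Lemma is_derive_Fint (a : R -> R) (x : R) :
  (forall y, continuous a y) -> is_derive (Fint a) x (a x).
Proof.
intros ha; apply (is_derive_RInt a (Fint a) 0 x); [|apply ha].
apply filter_forall; intros y.
apply (RInt_correct (V := R_CompleteNormedModule)).
apply (ex_RInt_continuous (V := R_CompleteNormedModule)); intros; apply ha.
Qed.

Lemma Fint_secant_bounds (a : R -> R) (y z : R) :
  (forall x, continuous a x) ->
  (forall c d, y <= c -> c < d -> d <= z -> a c < a d) -> y < z ->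
  a y * (z - y) < Fint a z - Fint a y < a z * (z - y).
Proof.
intros hcont hincr hyz.
destruct (MVT_cor2 (Fint a) a y z hyz) as (c & ec & hc).
{ intros c _; apply is_derive_Reals, is_derive_Fint, hcont. }
rewrite ec; split; apply Rmult_lt_compat_r; try lra; apply hincr; lra.
Qed.

Lemma Fint_remainder_pos (a : R -> R) (x del h : R) :
  (forall y, continuous a y) ->
  (forall y z, x - del < y -> y < z -> z < x + del -> a y < a z) ->
  0 < h -> h < del ->
  0 < Fint a (x + h) - Fint a x - a x * h /\
  0 < Fint a (x - h) - Fint a x + a x * h.
Proof.
intros hcont hincr hh hdel.
destruct (Fint_secant_bounds a x (x + h)) as [hr _]; auto;
  [intros; apply hincr; lra|lra|].
destruct (Fint_secant_bounds a (x - h) x) as [_ hl]; auto;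
  [intros; apply hincr; lra|lra|].
split; nra.
Qed.

Definition reduced_G1 (A B s0 t0 q u w : R) : R :=
  q * s0 ^ 2 - t0 * (u * A + w * B) + t0 * (u - w) * (u * A - w * B).

Definition reduced_G2 (A B H Hp s0 q u w : R) : R :=
  u * A * H - w * B * Hp - (u * A - w * B) * (s0 ^ 2 * q / 2 + u * H + w * Hp).

Lemma Gmap_symmetric a al1 al2 s0 t0 eps q u w :
  Gmap a al1 al2 s0 t0 eps (mkV4 (q / 2) (q / 2) u w) =
  mkV4 (reduced_G1 (a (al2 + t0) - a al2) (a al2 - a (al2 - t0)) s0 t0 q u w)
       (reduced_G2 (a (al2 + t0) - a al2) (a al2 - a (al2 - t0))
          (Fint a (al2 + t0) - Fint a al2 - a al2 * t0)
          (Fint a (al2 - t0) - Fint a al2 + a al2 * t0) s0 q u w)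
       0 (q + u + w - eps).
Proof.
unfold Gmap, Lmap, Qmap, V4_sub, Amul, combo, Acol, zeta1, zeta2, zeta3, zeta4, P1,
  M32_add, M32_scale, D1, D2, D3, reduced_G1, reduced_G2; simpl.
f_equal; field.
Qed.

Section SolutionCurve.
Variables A B H Hp s0 t0 : R.
Hypotheses (A_pos : 0 < A) (B_pos : 0 < B) (H_pos : 0 < H) (Hp_pos : 0 < Hp)
  (s0_pos : 0 < s0) (t0_pos : 0 < t0).

Lemma inv_sum_pos : 0 < / A + / B.
Proof.
pose proof (Rinv_0_lt_compat A A_pos); pose proof (Rinv_0_lt_compat B B_pos); lra.
Qed.

(** [k] is the value of [s0^2 q/2 + u H + w Hp] along the curve,
    [Tcurve k = u A + w B] and [theta k = u A / (u A + w B)]. *)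
Definition theta (k : R) : R := (Hp - k) / (H + Hp - 2 * k).
Definition rho (k : R) : R := theta k / A - (1 - theta k) / B.
Definition alpha (k : R) : R := t0 / 2 + theta k * H / A + (1 - theta k) * Hp / B.
Definition beta (k : R) : R := t0 * rho k * (2 * theta k - 1) / 2.
Definition Tcurve (k : R) : R := small_root (alpha k) (beta k) k.
Definition ucurve (k : R) : R := Tcurve k * theta k / A.
Definition wcurve (k : R) : R := Tcurve k * (1 - theta k) / B.
Definition qcurve (k : R) : R :=
  t0 * Tcurve k * (1 - Tcurve k * rho k * (2 * theta k - 1)) / s0 ^ 2.
Definition curve_sum (k : R) : R := qcurve k + ucurve k + wcurve k.

Definition admissible (k : R) : Prop :=
  0 <= k /\ k <= H / 2 /\ k <= Hp / 2 /\ 16 * k * (/ A + / B) <= t0.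

Lemma theta_bounds k : admissible k ->
  0 < H + Hp - 2 * k /\ 0 <= theta k <= 1.
Proof.
intros (hk0 & hkH & hkHp & _).
assert (hD : 0 < H + Hp - 2 * k) by lra.
split; [exact hD|unfold theta; split].
- apply Rdiv_le_0_compat; lra.
- assert (e : 1 - (Hp - k) / (H + Hp - 2 * k) = (H - k) / (H + Hp - 2 * k))
    by (field; lra).
  assert (0 <= (H - k) / (H + Hp - 2 * k)) by (apply Rdiv_le_0_compat; lra).
  lra.
Qed.

Lemma rho_bound k : admissible k ->
  Rabs (rho k * (2 * theta k - 1)) <= / A + / B.
Proof.
intros hk; destruct (theta_bounds k hk) as [_ hth].
assert (hiA : 0 < / A) by (apply Rinv_0_lt_compat; lra).
assert (hiB : 0 < / B) by (apply Rinv_0_lt_compat; lra).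
assert (hr : Rabs (rho k) <= / A + / B).
{ unfold rho, Rdiv; apply Rabs_le; split; nra. }
assert (hs : Rabs (2 * theta k - 1) <= 1) by (apply Rabs_le; split; lra).
rewrite Rabs_mult.
replace (/ A + / B) with ((/ A + / B) * 1) by ring.
apply Rmult_le_compat; auto using Rabs_pos.
Qed.

Lemma alpha_lower k : admissible k -> t0 / 2 <= alpha k.
Proof.
intros hk; destruct (theta_bounds k hk) as [_ hth]; unfold alpha.
assert (0 <= theta k * H / A) by (apply Rdiv_le_0_compat; nra).
assert (0 <= (1 - theta k) * Hp / B) by (apply Rdiv_le_0_compat; nra).
lra.
Qed.

Lemma beta_mul_k_bound k : admissible k -> Rabs (beta k * k) <= t0 ^ 2 / 32.
Proof.
intros hk; pose proof (rho_bound k hk) as hr; destruct hk as (hk0 & _ & _ & hg).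
unfold beta.
replace (t0 * rho k * (2 * theta k - 1) / 2 * k)
  with (t0 * k / 2 * (rho k * (2 * theta k - 1))) by field.
assert (htk : 0 <= t0 * k / 2) by (apply Rdiv_le_0_compat; nra).
rewrite Rabs_mult, (Rabs_pos_eq _ htk).
apply Rle_trans with (t0 * k / 2 * (/ A + / B)).
- apply Rmult_le_compat_l; [exact htk|exact hr].
- nra.
Qed.

Lemma discriminant_pos k : admissible k -> 0 < alpha k ^ 2 - 4 * beta k * k.
Proof.
intros hk.
pose proof (alpha_lower k hk); pose proof (beta_mul_k_bound k hk).
assert (beta k * k <= t0 ^ 2 / 32)
  by (apply Rle_trans with (Rabs (beta k * k)); auto using Rle_abs).
nra.
Qed.

Lemma Tcurve_spec k : admissible k ->
  alpha k * Tcurve k - beta k * Tcurve k ^ 2 = k /\ 0 <= Tcurve k /\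
  (0 < k -> 0 < Tcurve k) /\ Tcurve k * (rho k * (2 * theta k - 1)) <= 1 / 4.
Proof.
intros hk.
pose proof (alpha_lower k hk) as hal; pose proof (rho_bound k hk) as hr.
pose proof (discriminant_pos k hk) as hd.
destruct (small_root_spec (alpha k) (beta k) k) as (e & hT & hTp & hT2);
  [lra|apply hk|lra|].
fold (Tcurve k) in e, hT, hTp, hT2.
split; [exact e|split; [exact hT|split; [exact hTp|]]].
destruct hk as (_ & _ & _ & hg).
apply Rle_trans with (Tcurve k * (/ A + / B)).
- apply Rmult_le_compat_l; [exact hT|].
  apply Rle_trans with (Rabs (rho k * (2 * theta k - 1))); auto using Rle_abs.
- assert (Tcurve k * t0 <= 4 * k) by nra.
  pose proof inv_sum_pos; nra.
Qed.

Lemma curve_nonneg k : admissible k ->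
  0 <= qcurve k /\ 0 <= ucurve k /\ 0 <= wcurve k /\ (0 < k -> 0 < qcurve k).
Proof.
intros hk; destruct (theta_bounds k hk) as [_ hth].
destruct (Tcurve_spec k hk) as (_ & hT & hTp & hTc).
assert (hs : 0 < s0 ^ 2) by (apply pow_lt; lra).
unfold qcurve, ucurve, wcurve.
split; [|split; [|split]].
- apply Rdiv_le_0_compat; [|exact hs]. apply Rmult_le_pos; [nra|lra].
- apply Rdiv_le_0_compat; nra.
- apply Rdiv_le_0_compat; nra.
- intros hk0; specialize (hTp hk0).
  apply Rdiv_lt_0_compat; [|exact hs]. apply Rmult_lt_0_compat; [nra|lra].
Qed.

Lemma curve_solves k : admissible k ->
  reduced_G1 A B s0 t0 (qcurve k) (ucurve k) (wcurve k) = 0 /\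
  reduced_G2 A B H Hp s0 (qcurve k) (ucurve k) (wcurve k) = 0.
Proof.
intros hk; destruct (theta_bounds k hk) as [hD _].
destruct (Tcurve_spec k hk) as (e & _).
split.
- unfold reduced_G1, qcurve, ucurve, wcurve, rho; field; repeat split; lra.
- assert (K : s0 ^ 2 * qcurve k / 2 + ucurve k * H + wcurve k * Hp = k).
  { transitivity (alpha k * Tcurve k - beta k * Tcurve k ^ 2); [|exact e].
    unfold qcurve, ucurve, wcurve, alpha, beta; field; repeat split; lra. }
  unfold reduced_G2; rewrite K; unfold ucurve, wcurve, theta; field; repeat split; lra.
Qed.

Lemma curve_sum_continuous k : admissible k -> continuity_pt curve_sum k.
Proof.
intros hk; destruct (theta_bounds k hk) as [hD _].
assert (hD' : H + Hp - 2 * k <> 0) by lra.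
pose proof (discriminant_pos k hk) as hd.
pose proof (alpha_lower k hk) as hal.
assert (hr : alpha k + sqrt (alpha k ^ 2 - 4 * beta k * k) <> 0)
  by (pose proof (sqrt_pos (alpha k ^ 2 - 4 * beta k * k)); lra).
apply continuity_pt_filterlim.
apply (ex_derive_continuous (K := R_AbsRing) (V := R_NormedModule)).
unfold curve_sum, qcurve, ucurve, wcurve, Tcurve, small_root in *.
unfold alpha, beta, rho, theta in *.
auto_derive; repeat split; assumption.
Qed.

Lemma curve_sum_0 : curve_sum 0 = 0.
Proof.
assert (T0 : Tcurve 0 = 0).
{ unfold Tcurve, small_root, Rdiv; rewrite Rmult_0_r, Rmult_0_l; reflexivity. }
unfold curve_sum, qcurve, ucurve, wcurve; rewrite T0; field; repeat split; lra.
Qed.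

Lemma admissible_near_0 :
  exists kmax, 0 < kmax /\ forall k, 0 <= k <= kmax -> admissible k.
Proof.
set (g := / A + / B).
assert (hg : 0 < g) by exact inv_sum_pos.
exists (Rmin (Rmin H Hp / 2) (t0 / (16 * g))); split.
- pose proof (Rmin_glb_lt H Hp 0 H_pos Hp_pos).
  apply Rmin_glb_lt; [|apply Rdiv_lt_0_compat]; lra.
- intros k [hk0 hk].
  pose proof (Rmin_l (Rmin H Hp / 2) (t0 / (16 * g))).
  pose proof (Rmin_r (Rmin H Hp / 2) (t0 / (16 * g))).
  pose proof (Rmin_l H Hp); pose proof (Rmin_r H Hp).
  split; [lra|split; [lra|split; [lra|]]]; fold g.
  assert (e : t0 / (16 * g) * (16 * g) = t0) by (field; lra).
  assert (k * (16 * g) <= t0 / (16 * g) * (16 * g)) by (apply Rmult_le_compat_r; lra).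
  lra.
Qed.

Lemma reduced_system_solvable :
  exists eps0, 0 < eps0 /\ eps0 < 1 /\
    forall eps, 0 < eps -> eps <= eps0 ->
      exists q u w, 0 <= q /\ 0 <= u /\ 0 <= w /\
        reduced_G1 A B s0 t0 q u w = 0 /\ reduced_G2 A B H Hp s0 q u w = 0 /\
        q + u + w = eps.
Proof.
destruct admissible_near_0 as (kmax & hkmax & hadm).
assert (htot : 0 < curve_sum kmax).
{ destruct (curve_nonneg kmax (hadm kmax (conj (Rlt_le _ _ hkmax) (Rle_refl _))))
    as (_ & hu & hw & hq).
  unfold curve_sum; specialize (hq hkmax); lra. }
exists (Rmin (curve_sum kmax / 2) (1 / 2)).
pose proof (Rmin_l (curve_sum kmax / 2) (1 / 2)).
pose proof (Rmin_r (curve_sum kmax / 2) (1 / 2)).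
split; [apply Rmin_glb_lt; lra|split; [lra|]].
intros eps heps heps0.
assert (hcont : forall k, 0 <= k <= kmax -> continuity_pt (fun k => curve_sum k - eps) k).
{ intros k hk; apply continuity_pt_minus.
  - exact (curve_sum_continuous k (hadm k hk)).
  - apply continuity_pt_const; intros x y; reflexivity. }
destruct (Ranalysis5.IVT_interv _ 0 kmax hcont hkmax) as (z & hz & ez);
  [rewrite curve_sum_0; lra|lra|].
destruct (curve_nonneg z (hadm z hz)) as (hq & hu & hw & _).
destruct (curve_solves z (hadm z hz)) as [e1 e2].
exists (qcurve z), (ucurve z), (wcurve z).
repeat split; auto.
unfold curve_sum in ez; lra.
Qed.

End SolutionCurve.

Theorem lemma17 (a : R -> R) (al2 : R) :
  C2 a -> Derive a al2 > 0 ->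
  exists delta : R, 0 < delta /\
    forall al1 s0 t0 : R, 0 < s0 -> s0 < delta -> 0 < t0 -> t0 < delta ->
      exists eps0 : R, 0 < eps0 /\ eps0 < 1 /\
        forall eps : R, 0 < eps -> eps <= eps0 ->
          exists g : V4, V4_nonneg g /\ Gmap a al1 al2 s0 t0 eps g = V4_zero.
Proof.
intros (ha & hda & _) hpos.
assert (hcont : forall y, continuous a y)
  by (intros y; apply (ex_derive_continuous (V := R_NormedModule)), ha).
destruct (increasing_near a al2 ha (ex_derive_continuous _ _ (hda al2)) hpos)
  as (del & hdel & hincr).
exists del; split; [exact hdel|].
intros al1 s0 t0 hs0 _ ht0 ht0del.
assert (hA : 0 < a (al2 + t0) - a al2) by (pose proof (hincr al2 (al2 + t0)); lra).
assert (hB : 0 < a al2 - a (al2 - t0)) by (pose proof (hincr (al2 - t0) al2); lra).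
destruct (Fint_remainder_pos a al2 del t0 hcont hincr ht0 ht0del) as [hH hHp].
destruct (reduced_system_solvable _ _ _ _ s0 t0 hA hB hH hHp hs0 ht0)
  as (eps0 & heps0 & heps1 & hsol).
exists eps0; split; [exact heps0|split; [exact heps1|]].
intros eps heps hle.
destruct (hsol eps heps hle) as (q & u & w & hq & hu & hw & e1 & e2 & esum).
exists (mkV4 (q / 2) (q / 2) u w); split.
- unfold V4_nonneg; simpl; lra.
- rewrite Gmap_symmetric, e1, e2; unfold V4_zero; f_equal; lra.
Qed.
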